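(* Let $\mathfrak{A}=(Q,\Sigma,Q_0,\Delta,F)$ be a non-confluent Büchi automaton with $n=|Q|$ states and let $\mathcal{O}=\{(F_1,b_1),\ldots,(F_k,b_k)\}\subseteq 2^Q\times\mathbb{N}_+$. There exists a deterministic parity automaton $\mathfrak{P}$ over $\Sigma$ such that (1) $\mathfrak{P}$ accepts $w$ if and only if $\mathfrak{A}$ has an accepting run $\rho$ on $w$ such that for every $j\in\{1,\ldots,k\}$ every infix of $\rho$ of length $b_j$ contains at least one state from $F_j$; and (2) $|\mathfrak{P}|\le 2^{(n+1)^2}\cdot\left(\prod_{j=1}^k(b_j+1)\right)^{n}$ and $\mathfrak{P}$ uses at most $2n+1$ priorities.
   Context: A Büchi automaton $(Q,\Sigma,Q_0,\Delta,F)$ has finite state set $Q$, initial states $Q_0$, transitions $\Delta\subseteq Q\times\Sigma\times Q$, and accepts runs $q_0q_1\cdots$ ($q_0\in Q_0$, $(q_m,w_m,q_{m+1})\in\Delta$) visiting $F$ infinitely often. It is non-confluent if for every word $w$ and any two runs $q_0q_1\cdots$ and $q_0'q_1'\cdots$ on $w$, $q_m=q_m'$ implies $q_{m'}=q_{m'}'$ for all $m'<m$. A deterministic parity automaton $(Q',\Sigma,q_0',\delta,c)$ has transition function $\delta\colon Q'\times\Sigma\to Q'$ and priority function $c\colon Q'\to\mathbb{N}$, and accepts a word iff the minimal priority seen infinitely often on its run is even; its size is $|Q'|$ and its number of priorities is $|c(Q')|$. *)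

From mathcomp Require Import all_boot.
Set Implicit Arguments. Unset Strict Implicit. Unset Printing Implicit Defensive.

Definition word (Sigma : Type) := nat -> Sigma.

Definition is_run (Sigma Q : finType) (Q0 : {set Q}) (Delta : {set Q * Sigma * Q})
    (w : word Sigma) (r : nat -> Q) : Prop :=
  r 0 \in Q0 /\ forall m, (r m, w m, r m.+1) \in Delta.

Definition buchi_accepting (Q : finType) (F : {set Q}) (r : nat -> Q) : Prop :=
  forall N, exists m, N <= m /\ r m \in F.

Definition non_confluent (Sigma Q : finType) (Q0 : {set Q})
    (Delta : {set Q * Sigma * Q}) : Prop :=
  forall (w : word Sigma) (r r' : nat -> Q),
    is_run Q0 Delta w r -> is_run Q0 Delta w r' ->
    forall m, r m = r' m -> forall m', m' < m -> r m' = r' m'.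

Definition infixes_hit (Q : finType) (G : {set Q}) (b : nat) (r : nat -> Q) : Prop :=
  forall i, exists t, i <= t < i + b /\ r t \in G.

Record DPA (Sigma : finType) := {
  dQ : finType;
  dq0 : dQ;
  ddelta : dQ -> Sigma -> dQ;
  dprio : dQ -> nat
}.

Fixpoint dpa_run (Sigma : finType) (P : DPA Sigma) (w : word Sigma) (m : nat) : @dQ Sigma P :=
  match m with
  | 0 => @dq0 Sigma P
  | m'.+1 => @ddelta Sigma P (dpa_run P w m') (w m')
  end.

Definition dpa_accepts (Sigma : finType) (P : DPA Sigma) (w : word Sigma) : Prop :=
  exists p, ~~ odd p /\
    (forall N, exists m, N <= m /\ @dprio Sigma P (dpa_run P w m) = p) /\
    (exists N, forall m, N <= m -> p <= @dprio Sigma P (dpa_run P w m)).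

Definition dpa_size (Sigma : finType) (P : DPA Sigma) : nat := #|@dQ Sigma P|.
Definition dpa_num_priorities (Sigma : finType) (P : DPA Sigma) : nat :=
  size (undup [seq @dprio Sigma P q | q : @dQ Sigma P]).

From mathcomp Require Import all_boot zify.
From Stdlib Require Import Classical ClassicalEpsilon.
Set Implicit Arguments. Unset Strict Implicit. Unset Printing Implicit Defensive.

(* By non-confluence, a state reached at position m determines the whole run
   prefix leading to it, so the run prefixes form a tree in which every state
   alive at time m+1 has a unique parent alive at time m.  The deterministic
   automaton stores, besides that set of alive states,
   - for each alive state and each constraint (F_j, b_j) the number of steps
     since its run last visited F_j (a prefix dies when it reaches b_j), and
   - a Safra list: an ordered laminar list of nonempty sets of alive states,
     every node owning a state not covered by a younger node.
   A step replaces every node by the children of its states, spawns below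
   each node the set of its owned F-states, removes empty nodes and nodes
   nested in an older node that owns nothing ("green"), and compacts the
   list.  The step has priority 2h+1 (oldest emptied node h), 2h+2 (oldest
   green node h), or 2n+1. *)

(* Positions inside the list of indices below N that satisfy P: [rank P h]
   is the position that index h gets once the indices failing P are deleted. *)
Section Rank.
Variable P : pred nat.

Definition rank (h : nat) : nat := count P (iota 0 h).

Lemma filter_iota_split N h : h <= N ->
  [seq x <- iota 0 N | P x] = [seq x <- iota 0 h | P x] ++ [seq x <- iota h (N - h) | P x].
Proof. by move=> hN; rewrite -filter_cat -{1}(subnKC hN) iotaD. Qed.

Lemma nth_filter_rank N h : h < N -> P h -> nth 0 [seq x <- iota 0 N | P x] (rank h) = h.
Proof.
move=> hN Ph; rewrite (filter_iota_split (ltnW hN)) nth_cat size_filter ltnn subnn.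
by rewrite -(subnSK hN) /= Ph.
Qed.

Lemma rank_mono h h' : h <= h' -> rank h <= rank h'.
Proof. by move=> hh; rewrite /rank -(subnKC hh) iotaD count_cat leq_addr. Qed.

Lemma rank_lt h h' : h < h' -> P h -> rank h < rank h'.
Proof.
move=> hh Ph; rewrite /rank -(subnKC (ltnW hh)) iotaD count_cat add0n.
by rewrite -(subnSK hh) /= Ph; lia.
Qed.

Lemma rank_le h : rank h <= h.
Proof. by rewrite /rank -{2}(size_iota 0 h) count_size. Qed.

Lemma rank_id h : (forall x, x < h -> P x) -> rank h = h.
Proof.
move=> H; rewrite /rank -{2}(size_iota 0 h); apply/eqP; rewrite -all_count.
by apply/allP => x; rewrite mem_iota add0n => /H.
Qed.

Lemma filter_iota_nth N q : q < size [seq x <- iota 0 N | P x] ->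
  let h := nth 0 [seq x <- iota 0 N | P x] q in [/\ P h, h < N & rank h = q].
Proof.
move=> qs h.
have : h \in [seq x <- iota 0 N | P x] by apply: mem_nth.
rewrite mem_filter mem_iota add0n => /andP[Ph hN]; split => //.
have uq : uniq [seq x <- iota 0 N | P x] by apply/filter_uniq/iota_uniq.
have rs : rank h < size [seq x <- iota 0 N | P x] by rewrite size_filter; apply: rank_lt.
by apply/eqP; rewrite -(nth_uniq 0 rs qs uq) nth_filter_rank.
Qed.
End Rank.

(* Safra lists: a list L of sets of states, read as nodes ordered by age
   (index 0 is the oldest node).  A node owns the states it does not share
   with a younger node. *)
Section SafraList.
Variable Q : finType.
Implicit Types (L : seq {set Q}) (X Y : {set Q}).

Definition node L i := nth set0 L i.
Definition own L i := node L i :\: \bigcup_(j < size L | i < j) node L j.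

Definition laminar X Y := (Y \subset X) || [disjoint Y & X].

Definition wf L := [/\ forall i, i < size L -> node L i != set0,
   pairwise laminar L,
   forall i, i < size L -> own L i != set0 &
   forall i, i < size L -> node L i \subset node L 0].

Lemma disjoint_memP X Y : reflect (forall x, x \in X -> x \in Y -> False) [disjoint X & Y].
Proof.
rewrite -setI_eq0; apply: (iffP eqP) => [H x a b|H].
  have : x \in X :&: Y by rewrite inE a b.
  by rewrite H inE.
by apply/setP => x; rewrite !inE; apply/negP => /andP[a b]; apply: (H x a b).
Qed.

Definition alive L := \bigcup_(i < size L) node L i.

Lemma aliveP L x : reflect (exists2 i, i < size L & x \in node L i) (x \in alive L).
Proof.
apply: (iffP bigcupP) => [[i _ xi]|[i ilt xi]]; first by exists i.
by exists (Ordinal ilt).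
Qed.

Lemma laminar_node L i j : pairwise laminar L -> i < j -> j < size L ->
  laminar (node L i) (node L j).
Proof. move=> /(pairwiseP set0) H ij js; apply: H => //; rewrite inE /=; lia. Qed.

Lemma pairwise_node L (r : rel {set Q}) :
  (forall i j, i < j -> j < size L -> r (node L i) (node L j)) -> pairwise r L.
Proof. move=> H; apply/(pairwiseP set0) => i j; rewrite !inE /= => _ js ij; exact: H. Qed.

Lemma own_sub L i : own L i \subset node L i.
Proof. exact: subsetDl. Qed.

Lemma own_disjoint L i j x : i < j -> j < size L -> x \in own L i -> x \in node L j -> False.
Proof.
move=> ij js; rewrite inE => /andP[/negP nb _] xj; apply: nb.
by apply/bigcupP; exists (Ordinal js).
Qed.

(* Distinct nodes own distinct states, so a well-formed list has at most
   #|Q| nodes. *)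
Lemma size_wf L : wf L -> size L <= #|Q|.
Proof.
case=> _ _ Hown _.
case: L Hown => [//|X L'] Hown.
have [x0 _] : exists x, x \in own (X :: L') 0 by apply/set0Pn; apply: Hown.
set L := X :: L' in Hown *.
pose g (i : 'I_(size L)) := odflt x0 [pick x in own L i].
have gP (i : 'I_(size L)) : g i \in own L i.
  rewrite /g; case: pickP => [x -> //|H0].
  by move: (Hown i (ltn_ord i)) => /set0Pn[x]; rewrite H0.
have gne (i j : 'I_(size L)) : i < j -> g i != g j.
  move=> ij; apply/eqP => e; apply: (own_disjoint ij (ltn_ord j) (gP i)).
  by rewrite e; apply: (subsetP (own_sub _ _)); apply: gP.
have ginj : injective g.
  move=> i j gij; apply/val_inj/eqP; case: (ltngtP i j) => // ij.
  - by move: (gne _ _ ij); rewrite gij eqxx.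
  - by move: (gne _ _ ij); rewrite gij eqxx.
by have := leq_card g ginj; rewrite card_ord.
Qed.

Variable F : {set Q}.

(* The states of S whose parent (under p) lies in X: a node moved one step. *)
Definition lift (S : {set Q}) (p : Q -> Q) X := [set y in S | p y \in X].

Definition spawn L := [seq own L h :&: F | h <- iota 0 (size L)].
Definition extend L := L ++ spawn L.

Definition ownless L h := own L h == set0.
Definition green L h := (node L h != set0) && ownless L h &&
   ~~ [exists h' : 'I_h, ownless L h' && (node L h \subset node L h')].
Definition doomed L h := (node L h == set0) ||
   [exists h' : 'I_h, green L h' && (node L h \subset node L h')].
Definition kept L h := ~~ doomed L h.
Definition new_index L h := rank (kept L) h.
Definition prune L := [seq node L h | h <- iota 0 (size L) & kept L h].

Lemma kept_nonempty L h : kept L h -> node L h != set0.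
Proof. by rewrite /kept /doomed negb_or => /andP[]. Qed.

Lemma kept0 L : node L 0 != set0 -> kept L 0.
Proof. by move=> ne; rewrite /kept /doomed negb_or ne /=; apply/existsP => -[[]]. Qed.

Lemma size_extend L : size (extend L) = size L + size L.
Proof. by rewrite size_cat size_map size_iota. Qed.

Lemma node_extend_old L i : i < size L -> node (extend L) i = node L i.
Proof. by move=> il; rewrite /node nth_cat il. Qed.

Lemma node_extend_new L i : i < size L -> node (extend L) (size L + i) = own L i :&: F.
Proof.
move=> il; rewrite /node nth_cat ltnNge leq_addr /= addKn.
by rewrite (nth_map 0) ?size_iota // nth_iota.
Qed.

Lemma node_map f L i : i < size L -> node (map f L) i = f (node L i).
Proof. by move=> il; rewrite /node (nth_map set0). Qed.

Lemma lift_mono S p X Y : X \subset Y -> lift S p X \subset lift S p Y.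
Proof. by move=> /subsetP H; apply/subsetP => y; rewrite !inE => /andP[-> /H]. Qed.

Lemma lift_disjoint S p X Y : [disjoint X & Y] -> [disjoint lift S p X & lift S p Y].
Proof.
move=> /disjoint_memP H; apply/disjoint_memP => y; rewrite !inE => /andP[_ a] /andP[_ b].
exact: H a b.
Qed.

Lemma laminar_lift S p X Y : laminar X Y -> laminar (lift S p X) (lift S p Y).
Proof.
by case/orP => H; apply/orP; [left; apply: lift_mono|right; apply: lift_disjoint].
Qed.

Lemma pairwise_lift S p L : pairwise laminar L -> pairwise laminar (map (lift S p) L).
Proof. by rewrite pairwise_map; apply: sub_pairwise => X Y /=; apply: laminar_lift. Qed.

(* A spawned child sits inside its parent node and avoids all younger nodes,
   so spawning preserves laminarity. *)
Lemma pairwise_extend L : pairwise laminar L -> pairwise laminar (extend L).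
Proof.
move=> pL; apply: pairwise_node => a b ab; rewrite size_extend => bs.
have child_sub h : own L h :&: F \subset node L h.
  by apply: subset_trans (own_sub L h); exact: subsetIl.
case: (ltnP b (size L)) => bL.
  by rewrite !node_extend_old //; [apply: laminar_node|lia].
have -> : b = size L + (b - size L) by lia.
rewrite node_extend_new; last by lia.
set h := b - size L.
case: (ltnP a (size L)) => aL; last first.
  have -> : a = size L + (a - size L) by lia.
  rewrite node_extend_new; last by lia.
  apply/orP; right; apply/disjoint_memP => x /setIP[xo _] /setIP[xo' _].
  apply: (own_disjoint (_ : a - size L < h) (_ : h < size L) xo' (subsetP (own_sub _ _) _ xo)); lia.
rewrite node_extend_old //.
case: (ltngtP a h) => ah.
- have hL : h < size L by lia.
  case/orP: (laminar_node pL ah hL) => [sub|disj].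
    by apply/orP; left; apply: subset_trans sub.
  by apply/orP; right; apply: disjointWl disj.
- apply/orP; right; apply/disjoint_memP => x /setIP[xo _] xa.
  exact: (own_disjoint ah aL xo xa).
- by apply/orP; left; rewrite -ah.
Qed.

Lemma alive_extend L : alive (extend L) = alive L.
Proof.
apply/setP => x; apply/idP/idP; move/aliveP => [h hs xh]; apply/aliveP.
  move: hs; rewrite size_extend => hs.
  case: (ltnP h (size L)) => hL; first by exists h; rewrite // -node_extend_old.
  exists (h - size L); first by lia.
  rewrite (_ : h = size L + (h - size L)) in xh; last by lia.
  rewrite node_extend_new in xh; last by lia.
  by case/setIP: xh => /(subsetP (own_sub _ _)).
by exists h; [rewrite size_extend; lia| rewrite node_extend_old].
Qed.

Lemma head_extend L : (forall h, h < size L -> node L h \subset node L 0) ->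
  forall h, h < size (extend L) -> node (extend L) h \subset node (extend L) 0.
Proof.
move=> hd h; rewrite size_extend => hs.
have L_pos : 0 < size L by lia.
rewrite (node_extend_old L_pos); case: (ltnP h (size L)) => hL.
  by rewrite node_extend_old //; apply: hd.
have -> : h = size L + (h - size L) by lia.
rewrite node_extend_new; last by lia.
apply: subset_trans (subsetIl _ _) _; apply: subset_trans (own_sub _ _) _.
by apply: hd; lia.
Qed.

Lemma size_prune L : size (prune L) = rank (kept L) (size L).
Proof. by rewrite size_map size_filter. Qed.

Lemma node_prune L h : h < size L -> kept L h -> node (prune L) (new_index L h) = node L h.
Proof.
move=> hs kh; rewrite /node /prune (nth_map 0); last by rewrite size_filter; apply: rank_lt.
by rewrite nth_filter_rank.
Qed.

Lemma new_index_lt_size L h : h < size L -> kept L h -> new_index L h < size (prune L).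
Proof. by move=> hs kh; rewrite size_prune; apply: rank_lt. Qed.

Lemma prune_preimage L q : q < size (prune L) ->
  exists h, [/\ h < size L, kept L h, new_index L h = q & node (prune L) q = node L h].
Proof.
move=> qs; move: (qs); rewrite size_map => qs'.
have [Ph hN ph] := filter_iota_nth qs'.
exists (nth 0 [seq x <- iota 0 (size L) | kept L x] q); split => //.
by rewrite /node /prune (nth_map 0).
Qed.

Lemma green_kept L h : green L h -> kept L h.
Proof.
case/andP => /andP[ne no] nex; rewrite /kept /doomed negb_or ne /=.
apply/existsP => -[h' /andP[g sub]]; move/existsP: nex; apply.
by exists h'; rewrite sub andbT; case/andP: g => /andP[].
Qed.

(* A kept node owning nothing is green: the oldest ownless node containing
   it would be green and would doom it. *)
Lemma kept_ownless_green L h : kept L h -> ownless L h -> green L h.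
Proof.
rewrite /kept /doomed negb_or => /andP[ne nex] no.
rewrite /green ne no /=; apply/negP => /existsP[h0 /andP[no0 sub0]].
pose P h' := (h' < h) && ownless L h' && (node L h \subset node L h').
have exP : exists h', P h' by exists h0; rewrite /P ltn_ord no0 sub0.
case: (ex_minnP exP) => m /andP[/andP[mh nom] subm] minm.
move/existsP: nex; apply; exists (Ordinal mh) => /=; rewrite subm andbT.
rewrite /green nom andbT; apply/andP; split.
  by apply/set0Pn; move/set0Pn: ne => [x xh]; exists x; exact: (subsetP subm).
apply/negP => /existsP[h'' /andP[no'' sub'']].
have : m <= h''.
  apply: minm; rewrite /P no'' (subset_trans subm sub'') andbT.
  by have := ltn_ord h''; lia.
by have := ltn_ord h''; lia.
Qed.

Lemma green_disjoint L h h' : pairwise laminar L -> green L h -> h < h' -> h' < size L ->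
  kept L h' -> [disjoint node L h' & node L h].
Proof.
move=> pL g hh' hs kh; case/orP: (laminar_node pL hh' hs) => // sub.
move: kh; rewrite /kept /doomed negb_or => /andP[_ /existsP nex]; exfalso; apply: nex.
by exists (Ordinal hh'); rewrite g sub.
Qed.

(* After pruning every node owns a state again: an ownless kept node is
   green, hence disjoint from all younger kept nodes. *)
Lemma own_prune L q : pairwise laminar L -> q < size (prune L) -> own (prune L) q != set0.
Proof.
move=> pL qs; have [h [hs kh hq ndq]] := prune_preimage qs.
pose A := if ownless L h then node L h else own L h.
have Ane : A != set0.
  rewrite /A; case: ifP => no; last by rewrite /ownless in no; rewrite no.
  exact: kept_nonempty.
have Asub : A \subset node L h by rewrite /A; case: ifP => _ //; apply: own_sub.
case/set0Pn: Ane => x xA; apply/set0Pn; exists x; rewrite inE; apply/andP; split; last first.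
  by rewrite ndq; apply: (subsetP Asub).
apply/negP => /bigcupP[j qj xj].
have [h' [hs' kh' h'j ndj]] := prune_preimage (ltn_ord j).
have hh' : h < h'.
  rewrite ltnNge; apply/negP => le; have := rank_mono (kept L) le.
  by rewrite -/(new_index L h) -/(new_index L h') hq h'j; lia.
rewrite ndj in xj; move: xA; rewrite /A; case: ifP => no xA.
  have g := kept_ownless_green kh no.
  exact: (disjoint_memP _ _ (green_disjoint pL g hh' hs' kh') x xj xA).
exact: (own_disjoint hh' hs' xA xj).
Qed.

Lemma pairwise_prune L : pairwise laminar L -> pairwise laminar (prune L).
Proof.
move=> pL; rewrite /prune pairwise_map; apply: pairwise_filter.
apply/(pairwiseP 0) => a b; rewrite !inE /= size_iota => a_lt b_lt ab.
by rewrite !nth_iota // !add0n /=; exact: laminar_node.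
Qed.

Lemma head_prune L : (forall h, h < size L -> node L h \subset node L 0) ->
  forall q, q < size (prune L) -> node (prune L) q \subset node (prune L) 0.
Proof.
move=> H q qs; have [h [hs kh _ ->]] := prune_preimage qs.
have L_pos : 0 < size L by lia.
have ne0 : node L 0 != set0.
  case/set0Pn: (kept_nonempty kh) => x xh.
  by apply/set0Pn; exists x; apply: (subsetP (H h hs)).
by have := node_prune L_pos (kept0 ne0); rewrite /new_index /= => ->; exact: H.
Qed.

(* Doomed nodes are empty or nested in a kept green node, so pruning loses
   no state. *)
Lemma alive_prune L : alive (prune L) = alive L.
Proof.
apply/setP => x; apply/idP/idP.
  move/aliveP => [q qs xq]; have [h [hs _ _ e]] := prune_preimage qs.
  by apply/aliveP; exists h; rewrite // -e.
move/aliveP => [h hs xh].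
case kh : (kept L h).
  by apply/aliveP; exists (new_index L h); [apply: new_index_lt_size|rewrite node_prune].
move/negbFE: kh; rewrite /doomed => /orP[/eqP e|/existsP[h' /andP[g sub]]].
  by move: xh; rewrite e inE.
have h's : h' < size L by have := ltn_ord h'; lia.
apply/aliveP; exists (new_index L h'); first by apply: new_index_lt_size; [|apply: green_kept].
by rewrite node_prune; [apply: (subsetP sub)| |apply: green_kept].
Qed.

Definition safra_step (S : {set Q}) (p : Q -> Q) L := prune (extend (map (lift S p) L)).

Lemma alive_step (S : {set Q}) (p : Q -> Q) L : (forall y, y \in S -> p y \in alive L) ->
  alive (safra_step S p L) = S.
Proof.
move=> H; rewrite /safra_step alive_prune alive_extend; apply/setP => y; apply/idP/idP.
  by move/aliveP => [i]; rewrite size_map => il; rewrite node_map // inE => /andP[].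
move=> yS; have /aliveP[i il pi] := H y yS.
by apply/aliveP; exists i; [rewrite size_map | rewrite node_map // inE yS].
Qed.

Lemma wf_step (S : {set Q}) (p : Q -> Q) L : wf L -> wf (safra_step S p L).
Proof.
case=> _ pL _ hd.
set L1 := map (lift S p) L.
have hd1 h : h < size L1 -> node L1 h \subset node L1 0.
  by rewrite size_map => hs; rewrite !node_map; [apply/lift_mono/hd| |]; lia.
split.
- move=> q qs; have [h [hs kh _ ->]] := prune_preimage qs; exact: kept_nonempty.
- exact/pairwise_prune/pairwise_extend/pairwise_lift.
- by move=> q qs; apply: own_prune => //; apply/pairwise_extend/pairwise_lift.
- exact/head_prune/head_extend.
Qed.

End SafraList.

(* Priority of a step: given the number n of nodes before the step and the
   grown list L (before pruning), the least of 2h+1 over emptied nodes h < n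
   and 2h+2 over green nodes h < n, or [top] if there is none. *)
Section Priority.
Variable Q : finType.
Implicit Types (L : seq {set Q}).

Definition events n L :=
  [seq (2 * h).+1 | h <- iota 0 n & node L h == set0] ++
  [seq (2 * h).+2 | h <- iota 0 n & green L h].
Definition prio (top n : nat) L := foldr minn top (events n L).

Lemma prio_le top n L e : e \in events n L -> prio top n L <= e.
Proof.
rewrite /prio; elim: (events n L) => //= a s IH.
rewrite inE => /orP[/eqP->|/IH]; first exact: geq_minl.
by move=> H; apply: leq_trans H; apply: geq_minr.
Qed.

Lemma prio_top top n L : prio top n L <= top.
Proof.
by rewrite /prio; elim: (events n L) => //= a s IH; apply: leq_trans IH; exact: geq_minr.
Qed.

Lemma prio_in top n L : prio top n L = top \/ prio top n L \in events n L.
Proof.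
rewrite /prio; elim: (events n L) => [|a s IH] /=; first by left.
rewrite /minn; case: ifP => _; first by right; rewrite inE eqxx.
by case: IH => [->|H]; [left|right; rewrite inE H orbT].
Qed.

Lemma empty_event n L h : h < n -> node L h == set0 -> (2 * h).+1 \in events n L.
Proof.
move=> hs e; rewrite mem_cat; apply/orP; left; apply/mapP; exists h => //.
by rewrite mem_filter e mem_iota.
Qed.

Lemma green_event n L h : h < n -> green L h -> (2 * h).+2 \in events n L.
Proof.
move=> hs e; rewrite mem_cat; apply/orP; right; apply/mapP; exists h => //.
by rewrite mem_filter e mem_iota.
Qed.

Lemma eventP n L e : e \in events n L ->
  (exists h, [/\ h < n, e = (2 * h).+1 & node L h == set0]) \/
  (exists h, [/\ h < n, e = (2 * h).+2 & green L h]).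
Proof.
rewrite mem_cat => /orP[/mapP[h]|/mapP[h]]; rewrite mem_filter mem_iota add0n => /andP[a b] ->.
  by left; exists h.
by right; exists h.
Qed.

Lemma prio_pos top n L : 0 < top -> 0 < prio top n L.
Proof.
by move=> c; case: (prio_in top n L) => [-> //|/eventP [[h [_ -> _]]|[h [_ -> _]]]].
Qed.
End Priority.

Definition holds (P : Prop) : bool := if excluded_middle_informative P then true else false.
Lemma holdsP (P : Prop) : reflect P (holds P).
Proof. by rewrite /holds; case: excluded_middle_informative => H; constructor. Qed.

Definition infoften (P : nat -> Prop) := forall N, exists m, N <= m /\ P m.
Definition eventually (P : nat -> Prop) := exists N, forall m, N <= m -> P m.

Definition parity_accepting (g : nat -> nat) :=
  exists p, ~~ odd p /\ infoften (fun m => g m = p) /\ eventually (fun m => p <= g m).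

Lemma parity_accepting_ext g g' : parity_accepting g -> (forall m, g m = g' m) ->
  parity_accepting g'.
Proof.
move=> [p [ev [io [N HN]]]] e; exists p; split => //; split.
  by move=> M; have [m [Mm gm]] := io M; exists m; rewrite -e.
by exists N => m Nm; rewrite -e; apply: HN.
Qed.

Lemma parity_accepting_shift g : parity_accepting (fun m => g m.+1) <-> parity_accepting g.
Proof.
split=> -[p [ev [io [N HN]]]]; exists p; split => //; split.
- by move=> M; have [m [Mm e]] := io M; exists m.+1; split => //; lia.
- by exists N.+1 => m Nm; rewrite (_ : m = m.-1.+1); [apply: HN|]; lia.
- move=> M; have [m [Mm e]] := io M.+1.
  by exists m.-1; rewrite (_ : m.-1.+1 = m) //; lia.
- by exists N => m Nm; apply: HN; lia.
Qed.

Lemma not_infoften P : ~ infoften P -> eventually (fun m => ~ P m).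
Proof.
move=> H; apply: NNPP => H2; apply: H => N; apply: NNPP => H3; apply: H2.
by exists N => m Nm Pm; apply: H3; exists m.
Qed.

Lemma eventually_and P1 P2 : eventually P1 -> eventually P2 -> eventually (fun m => P1 m /\ P2 m).
Proof.
move=> [N1 H1] [N2 H2]; exists (maxn N1 N2) => m Nm; split.
  by apply: H1; apply: leq_trans Nm; apply: leq_maxl.
by apply: H2; apply: leq_trans Nm; apply: leq_maxr.
Qed.

Lemma below_eventually (g : nat -> nat) V :
  (forall v, v < V -> ~ infoften (fun m => g m = v)) -> eventually (fun m => V <= g m).
Proof.
elim: V => [|V IH] H; first by exists 0.
have [N H1] : eventually (fun m => V <= g m /\ ~ g m = V).
  apply: eventually_and; first by apply: IH => v vV; apply: H; lia.
  by apply/not_infoften/H.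
by exists N => m /H1 [a /eqP b]; rewrite ltn_neqAle eq_sym b.
Qed.

Lemma min_infoften (g : nat -> nat) B : (forall m, g m <= B) ->
  exists p, infoften (fun m => g m = p) /\ eventually (fun m => p <= g m).
Proof.
move=> gB.
have ex : exists p, holds (infoften (fun m => g m = p)).
  apply: NNPP => none.
  have [N HN] : eventually (fun m => B.+1 <= g m).
    by apply: below_eventually => v _ io; apply: none; exists v; apply/holdsP.
  by have := HN N (leqnn N); have := gB N; lia.
case: (ex_minnP ex) => p /holdsP io minp; exists p; split => //.
apply: below_eventually => v vp /holdsP /minp; lia.
Qed.

(* A sequence that is nonincreasing from m0 on is eventually constant:
   it stays at its least value once it has reached it. *)
Lemma noninc_const (g : nat -> nat) m0 :
  (forall m, m0 <= m -> g m.+1 <= g m) -> exists T, m0 <= T /\ forall m, T <= m -> g m = g T.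
Proof.
move=> H.
have mono a b : m0 <= a -> a <= b -> g b <= g a.
  move=> a0; elim: b => [|b IH] ab; first by have -> : a = 0 by lia.
  case: (leqP a b) => ab'; last by have -> : a = b.+1 by lia.
  by apply: leq_trans (IH ab'); apply: H; lia.
have ex : exists v, holds (exists m, m0 <= m /\ g m = v).
  by exists (g m0); apply/holdsP; exists m0.
case: (ex_minnP ex) => v /holdsP [T [m0T gT]] minv.
exists T; split => // m Tm; apply/eqP; rewrite eqn_leq mono //= gT.
by apply: minv; apply/holdsP; exists m; split => //; lia.
Qed.

Lemma find_min (P : pred nat) B : (exists q, q < B /\ P q) ->
  let f := find P (iota 0 B) in [/\ P f, f < B & forall q, P q -> f <= q].
Proof.
move=> [q [qB Pq]] f.
have hs : has P (iota 0 B) by apply/hasP; exists q; rewrite // mem_iota.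
have fs : f < B by rewrite -(size_iota 0 B) -has_find.
have Pf : P f by have := nth_find 0 hs; rewrite nth_iota.
split => // q' Pq'; rewrite leqNgt; apply/negP => lt.
by have := before_find 0 lt; rewrite nth_iota ?Pq' //; lia.
Qed.

(* König's lemma for a tree given level-wise: C m is the set of nodes of
   level m and par m maps level m+1 to level m. *)
Section Konig.
Variable Q : finType.
Variable par : nat -> Q -> Q.

Fixpoint ancestor (m d : nat) (y : Q) : Q :=
  if d is d'.+1 then ancestor m.-1 d' (par m.-1 y) else y.

Lemma ancestor_add m d1 d2 y : ancestor m (d1 + d2) y = ancestor (m - d1) d2 (ancestor m d1 y).
Proof.
elim: d1 m y => [|d1 IH] m y /=; first by rewrite subn0.
by rewrite IH; congr ancestor; lia.
Qed.

Lemma ancestor_last m d y : d < m -> ancestor m d.+1 y = par (m - d.+1) (ancestor m d y).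
Proof. by move=> dm; rewrite -addn1 ancestor_add /=; congr par; lia. Qed.

Lemma pigeon (A : {set Q}) (D : Q -> nat -> Prop) :
  (forall N, exists m', N <= m' /\ exists y, y \in A /\ D y m') ->
  exists y, y \in A /\ forall N, exists m', N <= m' /\ D y m'.
Proof.
move=> H; apply: NNPP => nex.
have Hy y : exists N, y \in A -> forall m', N <= m' -> ~ D y m'.
  apply: NNPP => ne; apply: nex; exists y.
  have yA : y \in A by apply: NNPP => nA; apply: ne; exists 0 => /nA.
  split => // N; apply: NNPP => nN; apply: ne; exists N => _ m' Nm' Dm; apply: nN.
  by exists m'.
pose Nf y := proj1_sig (constructive_indefinite_description _ (Hy y)).
have NfP y : y \in A -> forall m', Nf y <= m' -> ~ D y m'.
  by rewrite /Nf; case: constructive_indefinite_description.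
have [m' [Nm' [y [yA Dy]]]] := H (\max_(y : Q) Nf y).
by apply: (NfP y yA m') => //; apply: leq_trans Nm'; apply: leq_bigmax.
Qed.

Variables (C : nat -> {set Q}) (T : nat).
Hypothesis C_nonempty : forall m, T <= m -> C m != set0.
Hypothesis C_par : forall m y, T <= m -> y \in C m.+1 -> par m y \in C m.

Lemma ancestor_in m d y : T <= m - d -> d <= m -> y \in C m -> ancestor m d y \in C (m - d).
Proof.
elim: d m y => [|d IH] m y /= Tm dm yC; first by rewrite subn0.
have e : m = m.-1.+1 by lia.
have -> : m - d.+1 = m.-1 - d by lia.
apply: IH; [lia|lia|]; apply: C_par; first by lia.
by rewrite -e.
Qed.

Definition has_desc m y :=
  forall m', m <= m' -> exists z, z \in C m' /\ ancestor m' (m' - m) z = y.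

Lemma has_desc_of_inf m y : T <= m ->
  (forall N, exists m', N <= m' /\ m <= m' /\
     exists z, z \in C m' /\ ancestor m' (m' - m) z = y) ->
  has_desc m y.
Proof.
move=> Tm H m' mm'; have [m'' [Nm'' [mm'' [z [zC uz]]]]] := H m'.
exists (ancestor m'' (m'' - m') z); split.
  have := @ancestor_in m'' (m'' - m') z; rewrite (_ : m'' - (m'' - m') = m'); last by lia.
  by apply; [lia|lia|].
have e : m' = m'' - (m'' - m') by lia.
by rewrite {1}e -ancestor_add (_ : m'' - m' + (m' - m) = m'' - m) //; lia.
Qed.

Lemma good_root : exists y, y \in C T /\ has_desc T y.
Proof.
have HH N : exists m', N <= m' /\ exists y, y \in C T /\
   (fun y m' => T <= m' /\ exists z, z \in C m' /\ ancestor m' (m' - T) z = y) y m'.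
  exists (maxn N T); split; first exact: leq_maxl.
  have /set0Pn[z zC] := C_nonempty (leq_maxr N T).
  exists (ancestor (maxn N T) (maxn N T - T) z); split; last first.
    by split; [exact: leq_maxr| exists z].
  have := @ancestor_in (maxn N T) (maxn N T - T) z.
  rewrite (_ : maxn N T - (maxn N T - T) = T); last by have := leq_maxr N T; lia.
  by apply => //; have := leq_maxr N T; lia.
have [y [yC Hy]] := pigeon HH.
by exists y; split => //; apply: has_desc_of_inf.
Qed.

Lemma good_child m y : T <= m -> y \in C m -> has_desc m y ->
  exists c, [/\ c \in C m.+1, par m c = y & has_desc m.+1 c].
Proof.
move=> Tm yC dy.
have HH N : exists m', N <= m' /\ exists c, c \in [set c in C m.+1 | par m c == y] /\
  (fun c m' => m.+1 <= m' /\ exists z, z \in C m' /\ ancestor m' (m' - m.+1) z = c) c m'.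
  have [z [zC uz]] := dy (maxn N m.+1) (leq_trans (leqnSn m) (leq_maxr _ _)).
  exists (maxn N m.+1); split; first exact: leq_maxl.
  set M := maxn N m.+1 in zC uz *.
  have Mm : m.+1 <= M by apply: leq_maxr.
  exists (ancestor M (M - m.+1) z); split; last by split => //; exists z.
  rewrite inE; apply/andP; split.
    have := @ancestor_in M (M - m.+1) z; rewrite (_ : M - (M - m.+1) = m.+1); last by lia.
    by apply => //; lia.
  apply/eqP; rewrite -uz (_ : M - m = (M - m.+1) + 1); last by lia.
  by rewrite ancestor_add (_ : M - (M - m.+1) = m.+1) /=; last by lia.
have [c [cA Hc]] := pigeon HH.
move: cA; rewrite inE => /andP[cC /eqP pc]; exists c; split => //.
by apply: has_desc_of_inf => //; lia.
Qed.

(* Following good children from a good root yields the branch. *)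
Lemma konig : exists x : nat -> Q, forall m, T <= m -> x m \in C m /\ par m (x m.+1) = x m.
Proof.
have [y0 [y0C dy0]] := good_root.
pose good m y := holds (y \in C m /\ has_desc m y).
pose fix xk d := match d with
  | 0 => odflt y0 [pick y | good T y]
  | d'.+1 => odflt y0 [pick c | good (T + d').+1 c && (par (T + d') c == xk d')]
  end.
have child d : good (T + d) (xk d) ->
    exists c, good (T + d).+1 c && (par (T + d) c == xk d).
  move/holdsP => [yC dy]; have [c [cC pc dc]] := good_child (leq_addr _ _) yC dy.
  by exists c; rewrite pc eqxx andbT; apply/holdsP.
have G0 d : good (T + d) (xk d).
  elim: d => [|d IH] /=.
    rewrite addn0; case: pickP => [y -> //|nP].
    by apply/holdsP; split.
  case: pickP => [c /andP[gc _]|nP]; first by rewrite addnS.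
  by have [c cP] := child d IH; rewrite nP in cP.
have Hpar d : par (T + d) (xk d.+1) = xk d.
  rewrite /=; case: pickP => [c /andP[_ /eqP //]|nP].
  by have [c cP] := child d (G0 d); rewrite nP in cP.
exists (fun m => xk (m - T)) => m Tm.
have /holdsP [h1 _] := G0 (m - T); have h2 := Hpar (m - T).
rewrite (_ : T + (m - T) = m) in h1 h2; last by lia.
by split => //; rewrite (_ : m.+1 - T = (m - T).+1) //; lia.
Qed.
End Konig.

Lemma ancestor_on_branch (Q : finType) (par : nat -> Q -> Q) (x : nat -> Q) T :
  (forall m, T <= m -> par m (x m.+1) = x m) ->
  forall d m, T <= m - d -> d <= m -> ancestor par m d (x m) = x (m - d).
Proof.
move=> xp; elim => [|d IH] m Tmd dm /=; first by rewrite subn0.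
have e : m = m.-1.+1 by lia.
have := xp m.-1 (_ : T <= m.-1); rewrite -e => -> ; last by lia.
by rewrite IH; [congr x; lia|lia|lia].
Qed.

Lemma prefix_branch (Q : finType) (par : nat -> Q -> Q) (S : nat -> {set Q}) (x : nat -> Q) T :
  (forall m y, y \in S m.+1 -> par m y \in S m) ->
  (forall m, T <= m -> x m \in S m /\ par m (x m.+1) = x m) ->
  exists x', [/\ forall m, x' m \in S m, forall m, par m (x' m.+1) = x' m &
                 forall m, T <= m -> x' m = x m].
Proof.
move=> Spar Hx; pose x' m := if m < T then ancestor par T (T - m) (x T) else x m.
exists x'; split.
- move=> m; rewrite /x'; case: ltnP => mT; last by case: (Hx m mT).
  have := @ancestor_in Q par S 0 (fun m y _ => Spar m y) T (T - m) (x T).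
  rewrite (_ : T - (T - m) = m); last by lia.
  by apply; [lia|lia|case: (Hx T (leqnn T))].
- move=> m; rewrite /x'; case: (ltnP m.+1 T) => m1T.
    rewrite (_ : m < T); last by lia.
    rewrite (_ : T - m = (T - m.+1).+1); last by lia.
    by rewrite ancestor_last; [congr par; lia|lia].
  case: (ltnP m T) => mT; last by case: (Hx m mT).
  by rewrite (_ : T = m.+1) ?subSnn //; lia.
- by move=> m Tm; rewrite /x' ltnNge Tm.
Qed.

Section SafraRun.
Variables (Q : finType) (F : {set Q}) (S : nat -> {set Q}) (par : nat -> Q -> Q)
  (L : nat -> seq {set Q}).
Hypothesis L_wf : forall m, wf (L m).
Hypothesis L_alive : forall m, alive (L m) = S m.
Hypothesis L_step : forall m, L m.+1 = safra_step F (S m.+1) (par m) (L m).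

Definition grown m := extend F (map (lift (S m.+1) (par m)) (L m)).
Definition max_prio := (2 * #|Q|).+1.
Definition prio_at m := prio max_prio (size (L m)) (grown m).

Lemma list_succ m : L m.+1 = prune (grown m).
Proof. exact: L_step. Qed.

Lemma node_grown m h : h < size (L m) -> node (grown m) h = lift (S m.+1) (par m) (node (L m) h).
Proof. by move=> hs; rewrite /grown node_extend_old ?size_map // node_map. Qed.

Lemma node_grown_new m h : h < size (L m) ->
  node (grown m) (size (L m) + h) = own (map (lift (S m.+1) (par m)) (L m)) h :&: F.
Proof.
by move=> hs; rewrite /grown -(size_map (lift (S m.+1) (par m))) node_extend_new ?size_map.
Qed.

Lemma size_grown m : size (grown m) = size (L m) + size (L m).
Proof. by rewrite /grown size_extend size_map. Qed.

Lemma size_list m : size (L m) <= #|Q|.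
Proof. exact: size_wf. Qed.

Lemma pairwise_grown m : pairwise (@laminar Q) (grown m).
Proof. by case: (L_wf m) => _ pL _ _; apply/pairwise_extend/pairwise_lift. Qed.

(* Node j is frozen from time T on: it exists and neither it nor an older
   node is doomed, so nodes 0..j keep their indices. *)
Definition frozen j T :=
  forall m, T <= m -> j < size (L m) /\ (forall h, h <= j -> kept (grown m) h).
Definition green_io j := infoften (fun m => green (grown m) j).

Lemma frozen_index j T m h : frozen j T -> T <= m -> h <= j -> new_index (grown m) h = h.
Proof. by move=> fr Tm hj; apply: rank_id => x xh; have [_ K] := fr m Tm; apply: K; lia. Qed.

Lemma frozen_node j T m h : frozen j T -> T <= m -> h <= j -> node (L m.+1) h = node (grown m) h.
Proof.
move=> fr Tm hj; have [js K] := fr m Tm.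
rewrite list_succ -{1}(frozen_index fr Tm hj); apply: node_prune; last exact: K.
by rewrite size_grown; lia.
Qed.

(* A frozen node that is infinitely often green makes the least recurring
   priority 2j+2: smaller odd priorities would empty a node h <= j. *)
Lemma accept_of_frozen j T : frozen j T -> green_io j -> parity_accepting prio_at.
Proof.
move=> fr gio.
have [p [io [N HN]]] := @min_infoften prio_at max_prio (fun m => prio_top _ _ _).
exists p; split; last by split => //; exists N.
apply/negP => op.
have [m [Nm gm]] := gio (maxn N T).
have [js _] := fr m (leq_trans (leq_maxr _ _) Nm).
have pj : p <= (2 * j).+2.
  apply: leq_trans (HN m (leq_trans (leq_maxl _ _) Nm)) _.
  exact: prio_le (green_event js gm).
have [m' [Nm' e]] := io (maxn N T).
have [js' K] := fr m' (leq_trans (leq_maxr _ _) Nm').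
case: (prio_in max_prio (size (L m')) (grown m')) => [ec|].
  move: e; rewrite /prio_at ec /max_prio => ec'; move: op pj; rewrite -ec'.
  by have := size_list m'; lia.
rewrite -/(prio_at m') e => /eventP [[h [hs eh ne]]|[h [hs eh g]]].
  have hj : h <= j by lia.
  by move: (kept_nonempty (K h hj)); rewrite ne.
by move: op; rewrite eh /=; lia.
Qed.

Lemma even_prio_green m p : ~~ odd p -> prio_at m = p ->
  exists i, [/\ i < size (L m), p = (2 * i).+2 & green (grown m) i].
Proof.
move=> ev e; case: (prio_in max_prio (size (L m)) (grown m)) => [ec|].
  by move: ev; rewrite -e /prio_at ec /max_prio /=; lia.
rewrite -/(prio_at m) e => /eventP [[h [hs eh _]]|[h [hs eh g]]].
  by move: ev; rewrite eh /=; lia.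
by exists h.
Qed.

Lemma kept_below_prio m i h : i < size (L m) -> (2 * i).+2 <= prio_at m -> h <= i ->
  kept (grown m) h.
Proof.
move=> isz ip hi; rewrite /kept /doomed negb_or; apply/andP; split.
  apply/negP => ne; have := prio_le max_prio (empty_event (_ : h < size (L m)) ne).
  by rewrite -/(prio_at m); lia.
apply/negP => /existsP[h' /andP[g _]].
have h's : h' < size (L m) by have := ltn_ord h'; lia.
have := prio_le max_prio (green_event h's g); rewrite -/(prio_at m).
by have := ltn_ord h'; lia.
Qed.

Lemma frozen_of_prio_bound i N m0 : N <= m0 -> i < size (L m0) ->
  (forall m, N <= m -> (2 * i).+2 <= prio_at m) -> frozen i m0.
Proof.
move=> Nm0 is0 HN m m0m.
suff isz : i < size (L m) by split => // h; apply: kept_below_prio => //; apply: HN; lia.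
elim: m m0m => [|m IH] m0m; first by rewrite (_ : m0 = 0) in is0; lia.
case: (leqP m0 m) => lt; last by have -> : m.+1 = m0 by lia.
have K := kept_below_prio (IH lt) (HN m (leq_trans Nm0 lt)).
rewrite list_succ size_prune.
apply: leq_trans (rank_mono (kept (grown m)) (_ : i.+1 <= size (grown m))).
  by rewrite rank_id // => x xi; apply: K; lia.
by rewrite size_grown; have := IH lt; lia.
Qed.

Lemma frozen_of_accept : parity_accepting prio_at -> exists j T, frozen j T /\ green_io j.
Proof.
move=> [p [ev [io [N HN]]]].
have [m0 [Nm0 e0]] := io N.
have [i [is0 pi _]] := even_prio_green ev e0.
exists i, m0; split; first by apply: (frozen_of_prio_bound Nm0 is0) => m /HN; rewrite pi.
move=> N'; have [m [Nm e]] := io (maxn N' N).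
have [h [hs eh g]] := even_prio_green ev e.
exists m; split; first by apply: leq_trans Nm; apply: leq_maxl.
by have -> : i = h by lia.
Qed.

(* The branch
   lies in the root; if a frozen node i containing it is eventually never
   green, the branch eventually settles in a younger frozen node. *)
Section Complete.
Variable r : nat -> Q.
Hypothesis r_alive : forall m, r m \in S m.
Hypothesis r_par : forall m, par m (r m.+1) = r m.
Hypothesis r_F : infoften (fun m => r m.+1 \in F).

Lemma run_in_root m : r m \in node (L m) 0 /\ 0 < size (L m).
Proof.
move: (r_alive m); rewrite -L_alive => /aliveP [i isz ri].
case: (L_wf m) => _ _ _ hd; split; last by lia.
exact: (subsetP (hd i isz)).
Qed.

Lemma run_in_grown m h : h < size (L m) -> (r m.+1 \in node (grown m) h) = (r m \in node (L m) h).
Proof. by move=> hs; rewrite node_grown // inE r_alive r_par. Qed.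

Lemma frozen0 : frozen 0 0.
Proof.
move=> m _; have [r0 s0] := run_in_root m; split => // h; rewrite leqn0 => /eqP ->.
by apply: kept0; apply/set0Pn; exists (r m.+1); rewrite run_in_grown.
Qed.

Section Descend.
Variables (i T : nat).
Hypothesis i_frozen : frozen i T.
Hypothesis r_in_i : forall m, T <= m -> r m \in node (L m) i.
Hypothesis i_not_green : forall m, T <= m -> ~ green (grown m) i.

Definition in_younger m q := [&& i < q, q < size (L m) & r m \in node (L m) q].

(* Green nodes containing the branch are younger than i: an older one would
   doom i or be disjoint from it. *)
Lemma green_younger m h : T <= m -> h < size (L m) -> green (grown m) h ->
  r m \in node (L m) h -> i < h.
Proof.
move=> Tm hs g rh; have [isz K] := i_frozen Tm.
case: (ltngtP i h) => // [hi|ehi]; last by rewrite -ehi in g; case: (i_not_green Tm).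
exfalso; have isL : i < size (grown m) by rewrite size_grown; lia.
case/orP: (laminar_node (pairwise_grown m) hi isL) => [sub|/disjoint_memP D].
  move: (K i (leqnn i)); rewrite /kept /doomed negb_or => /andP[_ /negP]; apply.
  by apply/existsP; exists (Ordinal hi); rewrite g sub.
by case: (D (r m.+1)); rewrite run_in_grown //; apply: r_in_i.
Qed.

Lemma least_younger_kept m q : T <= m -> in_younger m q ->
  (forall q0, in_younger m q0 -> q <= q0) -> kept (grown m) q.
Proof.
move=> Tm /and3P[iq qs rq] minq; rewrite /kept /doomed negb_or; apply/andP; split.
  by apply/set0Pn; exists (r m.+1); rewrite run_in_grown.
apply/negP => /existsP[h' /andP[g sub]].
have h's : h' < size (L m) by have := ltn_ord h'; lia.
have rh' : r m \in node (L m) h'.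
  by rewrite -run_in_grown //; apply: (subsetP sub); rewrite run_in_grown.
have : q <= h' by apply: minq; rewrite /in_younger (green_younger Tm h's g rh') h's rh'.
by have := ltn_ord h'; lia.
Qed.

Lemma least_younger_step m q : T <= m -> in_younger m q ->
  (forall q0, in_younger m q0 -> q <= q0) ->
  [/\ in_younger m.+1 (new_index (grown m) q), new_index (grown m) q <= q &
      (new_index (grown m) q = q -> forall h, h <= q -> kept (grown m) h)].
Proof.
move=> Tm yq minq; have kq := least_younger_kept Tm yq minq.
case/and3P: yq => iq qs rq; have [isz K] := i_frozen Tm.
have qs2 : q < size (grown m) by rewrite size_grown; lia.
split; [apply/and3P; split| exact: rank_le |].
- by rewrite -{1}(frozen_index i_frozen Tm (leqnn i)); apply: rank_lt => //; exact: K.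
- by rewrite list_succ; apply: new_index_lt_size.
- by rewrite list_succ node_prune // run_in_grown.
move=> e h hq; case: (ltngtP h q) hq => // [hq _|-> _ //].
move/eqP: e; rewrite /new_index /rank -{2}(size_iota 0 q) -all_count => /allP A.
by apply: A; rewrite mem_iota.
Qed.

Lemma spawned_child m : T <= m -> r m.+1 \in F -> ~ (exists q, in_younger m q) ->
  in_younger m.+1 (new_index (grown m) (size (L m) + i)).
Proof.
move=> Tm rF nex; have [isz K] := i_frozen Tm.
set L1 := map (lift (S m.+1) (par m)) (L m).
have sL1 : size L1 = size (L m) by rewrite size_map.
have ro : r m.+1 \in own L1 i.
  rewrite inE; apply/andP; split; last by rewrite node_map // inE r_alive r_par r_in_i.
  apply/negP => /bigcupP[j ij rj]; apply: nex; exists j; rewrite /in_younger ij -sL1 ltn_ord /=.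
  by move: rj; rewrite node_map -?sL1 // inE => /andP[_]; rewrite r_par.
set c := size (L m) + i.
have rc : r m.+1 \in node (grown m) c by rewrite node_grown_new // inE ro rF.
have kc : kept (grown m) c.
  rewrite /kept /doomed negb_or; apply/andP; split; first by apply/set0Pn; exists (r m.+1).
  apply/negP => /existsP[h' /andP[g sub]]; have rh' := subsetP sub _ rc.
  case: (ltnP h' (size (L m))) => h's.
    have rh : r m \in node (L m) h' by rewrite -run_in_grown.
    by apply: nex; exists h'; rewrite /in_younger (green_younger Tm h's g rh) h's rh.
  have hlt : nat_of_ord h' < c := ltn_ord h'.
  move: rh'; rewrite (_ : nat_of_ord h' = size (L m) + (h' - size (L m))); last by lia.
  rewrite node_grown_new; last by lia.
  have h'i : h' - size (L m) < i by lia.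
  have iL1 : i < size L1 by rewrite sL1.
  case/setIP => ro' _; apply: (own_disjoint h'i iL1 ro').
  exact: (subsetP (own_sub _ _)).
have cs : c < size (grown m) by rewrite size_grown /c; lia.
apply/and3P; split.
- by rewrite -{1}(frozen_index i_frozen Tm (leqnn i)); apply: rank_lt; [rewrite /c; lia|exact: K].
- by rewrite list_succ; apply: new_index_lt_size.
- by rewrite list_succ node_prune.
Qed.

Lemma younger_eventually : exists m0, T <= m0 /\ forall m, m0 <= m -> exists q, in_younger m q.
Proof.
have [m1 [Tm1 rF]] := r_F T.
have [m0 [Tm0 q0]] : exists m0, T <= m0 /\ exists q, in_younger m0 q.
  case: (classic (exists q, in_younger m1 q)) => [ex|nex]; first by exists m1.
  by exists m1.+1; split; [lia|eexists; apply: spawned_child].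
exists m0; split => //; elim => [|m IH] m0m; first by rewrite (_ : 0 = m0) //; lia.
case: (leqP m0 m) => lt; last by have -> : m.+1 = m0 by lia.
have [q yq] := IH lt.
have [q' [yq' minq']] : exists q', in_younger m q' /\ forall q0, in_younger m q0 -> q' <= q0.
  by case: (ex_minnP (ex_intro _ q yq)) => q' ? ?; exists q'.
have [yq'' _ _] := least_younger_step (leq_trans Tm0 lt) yq' minq'.
by exists (new_index (grown m) q').
Qed.

(* The index of the oldest younger node holding the branch is eventually
   nonincreasing, hence eventually constant: that node is then frozen. *)
Lemma descend : exists j T', [/\ i < j, frozen j T' & forall m, T' <= m -> r m \in node (L m) j].
Proof.
have [m2 [Tm2 Pall]] := younger_eventually.
pose f m := find (in_younger m) (iota 0 #|Q|).
have fP m : m2 <= m -> [/\ in_younger m (f m) & forall q, in_younger m q -> f m <= q].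
  move=> m2m; have [q yq] := Pall m m2m.
  have [] // := @find_min (in_younger m) #|Q|; exists q; split => //.
  by case/and3P: yq => _ qs _; apply: leq_trans qs (size_list m).
have step m : m2 <= m -> let g := new_index (grown m) (f m) in
    [/\ in_younger m.+1 g, g <= f m & (g = f m -> forall h, h <= f m -> kept (grown m) h)].
  by move=> m2m; have [P1 P2] := fP m m2m; apply: least_younger_step => //; lia.
have fdec m : m2 <= m -> f m.+1 <= f m.
  move=> m2m; have [a b _] := step m m2m.
  by apply: leq_trans b; case: (fP m.+1 (leqW m2m)) => _; apply.
have [T' [m2T' HT']] := noninc_const fdec.
have PT m : T' <= m -> in_younger m (f T').
  by move=> T'm; rewrite -(HT' m T'm); case: (fP m (leq_trans m2T' T'm)).
exists (f T'), T'; split.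
- by case/and3P: (PT T' (leqnn T')).
- move=> m T'm; have /and3P[_ fs _] := PT m T'm; split => //.
  have [a b c] := step m (leq_trans m2T' T'm).
  have e1 := HT' m T'm; have e2 := HT' m.+1 (leqW T'm).
  have le1 : f m <= new_index (grown m) (f m).
    rewrite {1}e1 -e2; case: (fP m.+1 (leq_trans m2T' (leqW T'm))) => _; exact.
  by rewrite -e1; apply: c; apply/eqP; rewrite eqn_leq b le1.
- by move=> m T'm; case/and3P: (PT m T'm).
Qed.
End Descend.

Lemma descend_or_green i T : frozen i T -> (forall m, T <= m -> r m \in node (L m) i) ->
  green_io i \/ exists j T', [/\ i < j, frozen j T' & forall m, T' <= m -> r m \in node (L m) j].
Proof.
move=> fr ri; case: (classic (green_io i)) => [G|nG]; [by left|right].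
have [T1 HT1] := not_infoften nG.
have frT : frozen i (maxn T1 T).
  by move=> m Tm; apply: fr; apply: leq_trans Tm; apply: leq_maxr.
apply: (descend frT) => m Tm.
- by apply: ri; apply: leq_trans Tm; apply: leq_maxr.
- by apply: HT1; apply: leq_trans Tm; apply: leq_maxl.
Qed.

(* Descending can happen at most #|Q| times, since lists have at most #|Q|
   nodes. *)
Lemma complete : exists j T, frozen j T /\ green_io j.
Proof.
suff H d i T : #|Q| - i <= d -> frozen i T ->
    (forall m, T <= m -> r m \in node (L m) i) -> exists j T, frozen j T /\ green_io j.
  apply: (H #|Q| 0 0); [by rewrite subn0 | exact: frozen0 | by move=> m _; case: (run_in_root m)].
elim: d i T => [|d IH] i T di fr ri.
  by have [isz _] := fr T (leqnn T); have := size_list T; lia.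
case: (descend_or_green fr ri) => [G|[j [T' [ij frj rj]]]]; first by exists i, T.
apply: (IH j T') => //.
by have [js _] := frj T' (leqnn T'); have := size_list T'; lia.
Qed.
End Complete.

(* Between two green times
   g1 < g2, every state of node j at time g2+1 has an ancestor in F at some
   time in (g1+1, g2+1]: at g2 it lies in a younger node, and that node (or
   an ancestor node) was spawned after g1, when all younger nodes inside j
   were doomed. *)
Section Sound.
Hypothesis par_alive : forall m y, y \in S m.+1 -> par m y \in S m.
Variables (j T : nat).
Hypothesis j_frozen : frozen j T.

Let C m := node (L m) j.

Lemma C_succ m : T <= m -> C m.+1 = lift (S m.+1) (par m) (C m).
Proof.
by move=> Tm; have [js _] := j_frozen Tm; rewrite /C (frozen_node j_frozen Tm (leqnn j)) node_grown.
Qed.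

Lemma C_nonempty m : T <= m -> C m != set0.
Proof. by move=> Tm; have [js _] := j_frozen Tm; case: (L_wf m) => ne _ _ _; apply: ne. Qed.

Lemma C_par m y : T <= m -> y \in C m.+1 -> par m y \in C m.
Proof. by move=> Tm; rewrite C_succ // inE => /andP[]. Qed.

Lemma C_alive m y : T <= m -> y \in C m -> y \in S m.
Proof. by move=> Tm yC; have [js _] := j_frozen Tm; rewrite -L_alive; apply/aliveP; exists j. Qed.

Lemma younger_origin m y q : T <= m -> j < q -> q < size (L m.+1) -> y \in node (L m.+1) q ->
  exists h, [/\ j < h, h < size (grown m), kept (grown m) h & y \in node (grown m) h].
Proof.
move=> Tm jq; rewrite list_succ => qs yq.
have [h [hs kh ph e]] := prune_preimage qs.
exists h; split => //; last by rewrite -e.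
rewrite ltnNge; apply/negP => hj.
by move: (frozen_index j_frozen Tm hj) jq; rewrite ph; lia.
Qed.

Lemma grown_node_cases m y h : h < size (grown m) -> y \in node (grown m) h ->
  (h < size (L m) /\ par m y \in node (L m) h) \/ y \in F.
Proof.
rewrite size_grown => hs; case: (ltnP h (size (L m))) => hL.
  by rewrite node_grown // inE => /andP[_ pyh]; left.
rewrite (_ : h = size (L m) + (h - size (L m))); last by lia.
by rewrite node_grown_new; [case/setIP; right|lia].
Qed.

Lemma visit_since_green g1 : T <= g1 -> green (grown g1) j ->
  forall m y, g1 < m -> y \in C m -> (exists q, [&& j < q, q < size (L m) & y \in node (L m) q]) ->
  exists s, [/\ g1.+2 <= s, s <= m & ancestor par m (m - s) y \in F].
Proof.
move=> Tg1 g1gr; elim => [//|m IH] y g1m yC [q /and3P[jq qs yq]].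
have Tm : T <= m by lia.
have [h [jh hs kh yh]] := younger_origin Tm jq qs yq.
have [js _] := j_frozen Tm.
case: (ltngtP g1 m) => [lt|gt|eg]; [|by lia|].
  case: (grown_node_cases hs yh) => [[hL pyh]|yF].
    have yq' : exists q, [&& j < q, q < size (L m) & par m y \in node (L m) q].
      by exists h; rewrite jh hL pyh.
    have [s [s1 s2 sF]] := IH (par m y) lt (C_par Tm yC) yq'.
    exists s; split; [by lia|by lia|].
    by rewrite (_ : m.+1 - s = (m - s).+1) //=; lia.
  by exists m.+1; rewrite subnn /=; split => //; lia.
exfalso; rewrite -eg in h jh hs kh yh yC js.
have yj : y \in node (grown g1) j by rewrite node_grown // -C_succ.
case/orP: (laminar_node (pairwise_grown g1) jh hs) => [sub|/disjoint_memP D]; last exact: D y yh yj.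
move: kh; rewrite /kept /doomed negb_or => /andP[_ /negP]; apply.
by apply/existsP; exists (Ordinal jh); rewrite g1gr sub.
Qed.

Lemma visit_between_greens g1 g2 : T <= g1 -> g1 < g2 -> green (grown g1) j ->
  green (grown g2) j -> forall y, y \in C g2.+1 ->
  exists s, [/\ g1.+2 <= s, s <= g2.+1 & ancestor par g2.+1 (g2.+1 - s) y \in F].
Proof.
move=> Tg1 g12 gr1 gr2 y yC.
have Tg2 : T <= g2 by lia.
have [js _] := j_frozen Tg2.
have yj : y \in node (grown g2) j by rewrite node_grown // -C_succ.
move: gr2 => /andP[/andP[_ /eqP no] _].
have : y \notin own (grown g2) j by rewrite no inE.
rewrite inE yj andbT negbK => /bigcupP[h jh yh].
case: (grown_node_cases (ltn_ord h) yh) => [[hL pyh]|yF]; last first.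
  by exists g2.+1; rewrite subnn /=; split => //; lia.
have yq : exists q, [&& j < q, q < size (L g2) & par g2 y \in node (L g2) q].
  by exists h; rewrite jh hL pyh.
have [s [s1 s2 sF]] := visit_since_green Tg1 gr1 g12 (C_par Tg2 yC) yq.
exists s; split; [by lia|by lia|].
by rewrite (_ : g2.+1 - s = (g2 - s).+1) //=; lia.
Qed.

Lemma sound : green_io j -> exists x : nat -> Q,
  [/\ forall m, x m \in S m, forall m, par m (x m.+1) = x m & infoften (fun m => x m \in F)].
Proof.
move=> gio; have [x Hx] := konig C_nonempty C_par.
have xF : infoften (fun m => x m \in F).
  move=> N; have [g1 [Ng1 gr1]] := gio (maxn N T).
  have [g2 [g12 gr2]] := gio g1.+1.
  have Tg1 : T <= g1 by apply: leq_trans Ng1; apply: leq_maxr.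
  have Tg2 : T <= g2.+1 by lia.
  have [xC _] := Hx g2.+1 Tg2.
  have [s [s1 s2]] := visit_between_greens Tg1 g12 gr1 gr2 xC.
  rewrite (ancestor_on_branch (fun m Tm => proj2 (Hx m Tm))); [|lia|lia].
  rewrite (_ : g2.+1 - (g2.+1 - s) = s); last by lia.
  by exists s; split => //; have := leq_maxl N T; lia.
have [x' [x'S x'p x'x]] := prefix_branch par_alive
  (fun m Tm => let: conj a b := Hx m Tm in conj (C_alive Tm a) b).
exists x'; split => // N; have [m [Nm xm]] := xF (maxn N T).
exists m; split; first by apply: leq_trans Nm; apply: leq_maxl.
by rewrite x'x //; apply: leq_trans Nm; apply: leq_maxr.
Qed.
End Sound.

Theorem safra_run_correct : (forall m y, y \in S m.+1 -> par m y \in S m) ->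
  parity_accepting prio_at <->
  exists x : nat -> Q, [/\ forall m, x m \in S m, forall m, par m (x m.+1) = x m &
                           infoften (fun m => x m \in F)].
Proof.
move=> par_alive; split.
  by case/frozen_of_accept => j [T [fr gio]]; apply: (sound par_alive fr gio).
case=> x [xS xp xF].
have xF' : infoften (fun m => x m.+1 \in F).
  by move=> N; have [m [Nm xm]] := xF N.+1; exists m.-1; rewrite (_ : m.-1.+1 = m) //; lia.
by have [j [T [fr gio]]] := complete xS xp xF'; apply: (accept_of_frozen fr gio).
Qed.
End SafraRun.

(* gap G r m is the length of the longest suffix of r_0 ... r_m avoiding G;
   every infix of length b meets G iff all gaps stay below b. *)
Section Gap.
Variables (Q : finType) (G : {set Q}).

Fixpoint gap (r : nat -> Q) (m : nat) : nat :=
  if m is m'.+1 then (if r m \in G then 0 else (gap r m').+1)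
  else (if r 0 \in G then 0 else 1).

Lemma gap_le r m : gap r m <= m.+1.
Proof. by elim: m => [|m IH] /=; case: ifP. Qed.

Lemma gap_hit r m : gap r m <= m -> r (m - gap r m) \in G.
Proof.
elim: m => [|m IH] /=; first by case: ifP.
case: ifP => [h _|_ le]; first by rewrite subn0.
by rewrite subSS; apply: IH.
Qed.

Lemma gap_nohit r m t : t <= m -> m - t < gap r m -> r t \notin G.
Proof.
elim: m t => [|m IH] t /=; first by rewrite leqn0 => /eqP ->; case: ifP.
case: ifP => // nh tm; case: (ltngtP t m.+1) tm => // [tm _|-> _]; last by rewrite nh.
by move=> lt; apply: IH; lia.
Qed.

Lemma gap_bounded_iff r b : 0 < b -> (forall m, gap r m < b) <-> infixes_hit G b r.
Proof.
move=> b0; split => [H i|H m].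
  have := H (i + b.-1); have := gap_le r (i + b.-1).
  case: (leqP (gap r (i + b.-1)) (i + b.-1)) => le _ lt; last by lia.
  exists (i + b.-1 - gap r (i + b.-1)); split; last exact: gap_hit.
  by apply/andP; split; lia.
rewrite ltnNge; apply/negP => bd; have := gap_le r m => dm.
have [t [/andP[it tib] tF]] := H (m.+1 - b).
have tm : t <= m by lia.
have mt : m - t < gap r m by lia.
by have := gap_nohit tm mt; rewrite tF.
Qed.
End Gap.

Lemma card_sets (T : finType) : #|{: {set T}}| = 2 ^ #|T|.
Proof. by have := card_powerset [set: T]; rewrite powersetT !cardsT. Qed.

Section Automaton.
Variables (Sigma Q : finType) (Q0 : {set Q}) (Delta : {set Q * Sigma * Q}) (F : {set Q})
  (k : nat) (Fs : 'I_k -> {set Q}) (bs : 'I_k -> nat).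
Local Notation n := #|Q|.

(* A state stores the priority of the last step (minus one), the Safra list
   padded with empty sets to length n, and for each state and constraint j
   a counter bounded by b_j.  The alive set is the union of the list. *)
Definition counters := {dffun forall j : 'I_k, 'I_(bs j).+1}.
Definition dstate := ('I_(2 * n).+1 * (n.-tuple {set Q}) * {ffun Q -> counters})%type.

Definition enc (L : seq {set Q}) : n.-tuple {set Q} := [tuple nth set0 L i | i < n].
Definition dec (t : n.-tuple {set Q}) : seq {set Q} := [seq X <- t | X != set0].

(* The alive predecessors of y on letter a, and the parent of y (meaningful
   when y has exactly one). *)
Definition preds (S : {set Q}) (a : Sigma) (y : Q) := [set p in S | (p, a, y) \in Delta].
Definition parent S a y := odflt y [pick p in preds S a y].

Definition bump (C : {ffun Q -> counters}) (p y : Q) (j : 'I_k) : nat :=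
  if y \in Fs j then 0 else (C p j : nat).+1.
Definition counts_ok C p y := [forall j, bump C p y j < bs j].
Definition mk_counters (f : 'I_k -> nat) : counters := finfun (fun j => @inord (bs j) (f j)).

Definition next_alive S C a :=
  [set y | (#|preds S a y| == 1) && counts_ok C (parent S a y) y].
Definition next_counters S C a : {ffun Q -> counters} :=
  [ffun y => mk_counters (bump C (parent S a y) y)].

Definition count0 (y : Q) (j : 'I_k) : nat := if y \in Fs j then 0 else 1.
Definition alive0 := [set y in Q0 | [forall j, count0 y j < bs j]].
Definition counters0 : {ffun Q -> counters} := [ffun y => mk_counters (count0 y)].
Definition list0 : seq {set Q} := if alive0 == set0 then [::] else [:: alive0].

Definition init : dstate := (ord0, enc list0, counters0).
Definition dstep (s : dstate) (a : Sigma) : dstate :=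
  let L := dec s.1.2 in let C := s.2 in let S := alive L in
  let S' := next_alive S C a in let p := parent S a in
  (inord (prio (2 * n).+1 (size L) (extend F (map (lift S' p) L))).-1,
   enc (safra_step F S' p L), next_counters S C a).
Definition safra_dpa : DPA Sigma :=
  {| dQ := dstate; dq0 := init; ddelta := dstep; dprio := fun s => (nat_of_ord s.1.1).+1 |}.

(* 2n+1 priorities, 2^(n*n) padded lists, and (prod (b_j+1))^n counters. *)
Lemma safra_dpa_size :
  dpa_size safra_dpa <= 2 ^ ((n + 1) ^ 2) * (\prod_(j < k) (bs j + 1)) ^ n.
Proof.
rewrite /dpa_size /= (card_prod _ {ffun Q -> counters}) card_prod card_ord card_tuple.
rewrite card_sets card_ffun.
have -> : #|{: counters}| = \prod_(j < k) (bs j + 1).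
  rewrite card_dep_ffun foldrE big_map big_enum /=; apply: eq_bigr => j _.
  by rewrite card_ord addn1.
apply: leq_mul => //.
rewrite -expnM (_ : (n + 1) ^ 2 = (2 * n).+1 + n * n); last by rewrite -mulnn; lia.
by rewrite expnD; apply: leq_mul => //; apply/ltnW/ltn_expl.
Qed.

Lemma safra_dpa_priorities : dpa_num_priorities safra_dpa <= 2 * n + 1.
Proof.
rewrite /dpa_num_priorities.
have -> : 2 * n + 1 = size [seq i.+1 | i <- iota 0 (2 * n).+1] by rewrite size_map size_iota addn1.
apply: uniq_leq_size; first exact: undup_uniq.
move=> x; rewrite mem_undup => /mapP[q _ ->].
have -> : dprio q = (nat_of_ord q.1.1).+1 by [].
by rewrite map_f // mem_iota add0n ltn_ord.
Qed.

Lemma mk_countersE f j : (mk_counters f j : nat) = if f j < (bs j).+1 then f j else 0.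
Proof. by rewrite /mk_counters ffunE /inord /insubd; case: insubP => [u -> /= ->|/negbTE ->]. Qed.

Lemma dec_enc L : wf L -> dec (enc L) = L.
Proof.
move=> IL; have sz := size_wf IL; case: IL => ne _ _ _.
have e : tval (enc L) = [seq nth set0 L i | i <- iota 0 n].
  by rewrite /= -val_enum_ord -map_comp.
rewrite /dec e -(subnKC sz) iotaD map_cat filter_cat.
have -> : [seq nth set0 L i | i <- iota 0 (size L)] = L by rewrite -/(mkseq _ _) mkseq_nth.
rewrite (_ : [seq X <- L | X != set0] = L); last first.
  by apply/all_filterP/(all_nthP set0) => i il; exact: ne.
rewrite (_ : [seq X <- _ | X != set0] = [::]) ?cats0 //.
apply/eqP; rewrite -[_ == _]negbK -has_filter; apply/hasPn => X /mapP[i].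
by rewrite mem_iota => /andP[li _] ->; rewrite nth_default // eqxx.
Qed.

Lemma wf_list0 : wf list0.
Proof.
rewrite /list0; case: ifP => e; first by split => // i.
split => //=.
- by case => // _; rewrite /node /= e.
- case => // _; rewrite /own /node /=.
  rewrite (_ : \bigcup_(j < 1 | 0 < j) _ = set0) ?setD0 ?e //.
  by rewrite big_pred0 // => -[[]].
- by case.
Qed.

Lemma alive_list0 : alive list0 = alive0.
Proof.
apply/setP => y; apply/aliveP/idP => [[i]|yS].
  by rewrite /list0; case: ifP => e //=; case: i => // _; rewrite /node.
have ne : alive0 != set0 by apply/set0Pn; exists y.
by exists 0; rewrite /list0 (negbTE ne) /node.
Qed.

Lemma parent_pred S a y : #|preds S a y| == 1 -> parent S a y \in preds S a y.
Proof.
move=> /eqP c; rewrite /parent; case: pickP => [p -> //|H].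
by move: c; rewrite (eq_card0 H).
Qed.

Lemma next_alive_parent S C a y : y \in next_alive S C a ->
  parent S a y \in S /\ (parent S a y, a, y) \in Delta.
Proof. by rewrite inE => /andP[/parent_pred]; rewrite inE => /andP[-> ->]. Qed.

Section Word.
Variable w : word Sigma.

Definition state_at m := dpa_run safra_dpa w m.
Definition list_at m := dec (state_at m).1.2.
Definition counters_at m := (state_at m).2.
Definition alive_at m := alive (list_at m).
Definition parent_at m := parent (alive_at m) (w m).

Lemma list_at_wf m : wf (list_at m) /\
  list_at m.+1 =
    safra_step F (next_alive (alive_at m) (counters_at m) (w m)) (parent_at m) (list_at m).
Proof.
elim: m => [|m [IH _]].
  have I0 : wf (list_at 0) by rewrite /list_at /= dec_enc //; apply: wf_list0.
  by split => //; rewrite /list_at /= dec_enc //; apply: wf_step.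
have I1 : wf (list_at m.+1) by rewrite /list_at /= dec_enc //; apply: wf_step.
by split => //; rewrite /list_at [state_at m.+2]/= dec_enc //; apply: wf_step.
Qed.

Lemma alive_succ m : alive_at m.+1 = next_alive (alive_at m) (counters_at m) (w m).
Proof.
rewrite /alive_at (proj2 (list_at_wf m)) alive_step // => y /next_alive_parent [h _].
exact: h.
Qed.

Lemma counters_succ m : counters_at m.+1 = next_counters (alive_at m) (counters_at m) (w m).
Proof. by []. Qed.

Lemma alive_at0 : alive_at 0 = alive0.
Proof. by rewrite /alive_at /list_at /= dec_enc ?alive_list0 //; apply: wf_list0. Qed.

Lemma list_at_step m : list_at m.+1 = safra_step F (alive_at m.+1) (parent_at m) (list_at m).
Proof. by rewrite alive_succ; case: (list_at_wf m). Qed.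

Lemma parent_at_alive m y : y \in alive_at m.+1 -> parent_at m y \in alive_at m.
Proof. by rewrite alive_succ => /next_alive_parent []. Qed.

Lemma prio_succ m : dprio (state_at m.+1) = prio_at F alive_at parent_at list_at m.
Proof.
have p1 : 0 < prio_at F alive_at parent_at list_at m by apply: prio_pos.
have p2 : prio_at F alive_at parent_at list_at m <= (2 * n).+1 by apply: prio_top.
have e : (state_at m.+1).1.1 = inord (prio_at F alive_at parent_at list_at m).-1.
  by rewrite /prio_at /grown /max_prio alive_succ.
have -> : dprio (state_at m.+1) = (nat_of_ord (state_at m.+1).1.1).+1 by [].
by rewrite e inordK; lia.
Qed.

(* Soundness: a branch through the alive sets is a run whose gaps are the
   stored counters, hence below the bounds. *)
Lemma branch_is_run x : (forall m, x m \in alive_at m) ->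
  (forall m, parent_at m (x m.+1) = x m) ->
  is_run Q0 Delta w x /\
  forall j m, (counters_at m (x m) j : nat) = gap (Fs j) x m /\ gap (Fs j) x m < bs j.
Proof.
move=> xS xp; split.
  split; first by move: (xS 0); rewrite alive_at0 inE => /andP[].
  move=> m; move: (xS m.+1); rewrite alive_succ => /next_alive_parent [_].
  by rewrite -/(parent_at m (x m.+1)) xp.
move=> j; elim => [|m IH].
  move: (xS 0); rewrite alive_at0 inE => /andP[_ /forallP /(_ j) lt].
  by rewrite /counters_at /= ffunE mk_countersE ifT //; lia.
move: (xS m.+1); rewrite alive_succ inE => /andP[_ /forallP /(_ j)].
rewrite /bump -/(parent_at m (x m.+1)) xp (proj1 IH) => lt.
rewrite counters_succ ffunE mk_countersE /bump -/(parent_at m (x m.+1)) xp (proj1 IH).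
by rewrite ifT /=; [case: ifP lt|lia].
Qed.

Lemma alive_reachable m y : y \in alive_at m ->
  exists f : nat -> Q, [/\ f m = y, f 0 \in Q0 & forall i, i < m -> (f i, w i, f i.+1) \in Delta].
Proof.
elim: m y => [|m IH] y; first by rewrite alive_at0 inE => /andP[yQ _]; exists (fun _ => y).
rewrite alive_succ => /next_alive_parent [pS tr].
have [f [fm f0 ft]] := IH _ pS.
exists (fun i => if i <= m then f i else y); split => //=; first by rewrite ltnn.
move=> i im; case: (ltnP i m) => lt; first by rewrite (ltnW lt); apply: ft.
by rewrite (_ : i = m) ?leqnn ?fm //; lia.
Qed.

(* By non-confluence, an alive state r m is the only alive predecessor of
   its run successor r m.+1: another one would start a second run prefix
   meeting the first at m+1. *)
Lemma unique_pred (hnc : non_confluent Q0 Delta) r : is_run Q0 Delta w r ->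
  forall m, r m \in alive_at m -> preds (alive_at m) (w m) (r m.+1) = [set r m].
Proof.
move=> [r0 rt] m rS; apply/eqP; rewrite eqEsubset; apply/andP; split; last first.
  by rewrite sub1set /preds inE rS rt.
apply/subsetP => p; rewrite /preds !inE => /andP[pS pt]; apply/eqP.
have [f [fm f0 ft]] := alive_reachable pS.
pose r' i := if i <= m then f i else r i.
have run' : is_run Q0 Delta w r'.
  split; first by rewrite /r' leq0n.
  move=> i; rewrite /r'; case: (ltnP i m) => lt; first by rewrite (ltnW lt); apply: ft.
  have [e|gt] : i = m \/ m < i by lia.
    by rewrite e leqnn fm.
  by rewrite leqNgt gt /=.
have := hnc w r' r run' (conj r0 rt) m.+1; rewrite /r' ltnn => /(_ erefl m (ltnSn m)).
by rewrite leqnn fm.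
Qed.

Lemma run_tracked (hnc : non_confluent Q0 Delta) r : is_run Q0 Delta w r ->
  (forall j m, gap (Fs j) r m < bs j) ->
  forall m, [/\ r m \in alive_at m, parent_at m (r m.+1) = r m &
                forall j, (counters_at m (r m) j : nat) = gap (Fs j) r m].
Proof.
move=> run rb.
have par_r m : r m \in alive_at m -> parent_at m (r m.+1) = r m.
  move=> rS; have := @parent_pred (alive_at m) (w m) (r m.+1).
  by rewrite unique_pred // cards1 eqxx inE => /(_ isT) /eqP.
suff A m : r m \in alive_at m /\ forall j, (counters_at m (r m) j : nat) = gap (Fs j) r m.
  by move=> m; have [rS C] := A m; split => //; apply: par_r.
elim: m => [|m [rS IH]].
  have rS0 : r 0 \in alive_at 0.
    by rewrite alive_at0 inE (proj1 run); apply/forallP => j; exact: rb j 0.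
  split => // j; rewrite /counters_at /= ffunE mk_countersE ifT //.
  by rewrite /count0; have := rb j 0; rewrite /=; case: ifP => _; lia.
have tp := par_r m rS.
have rS1 : r m.+1 \in alive_at m.+1.
  rewrite alive_succ inE unique_pred // cards1 eqxx -/(parent_at m _) tp /=.
  by apply/forallP => j; rewrite /bump IH; have := rb j m.+1.
split => // j; rewrite counters_succ ffunE mk_countersE /bump -/(parent_at m _) tp IH.
by have := rb j m.+1; rewrite /=; case: (r m.+1 \in Fs j) => /= lt; rewrite ?ifT //; lia.
Qed.

Theorem safra_dpa_correct (hb : forall j, 0 < bs j) (hnc : non_confluent Q0 Delta) :
  dpa_accepts safra_dpa w <-> exists r : nat -> Q,
    [/\ is_run Q0 Delta w r, buchi_accepting F r & forall j : 'I_k, infixes_hit (Fs j) (bs j) r].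
Proof.
pose g m := prio_at F alive_at parent_at list_at m.
have shift : dpa_accepts safra_dpa w <-> parity_accepting g.
  split => acc.
    have := proj2 (parity_accepting_shift (fun m => dprio (state_at m))) acc.
    by move/parity_accepting_ext; apply => m; rewrite prio_succ.
  apply/(parity_accepting_shift (fun m => dprio (state_at m))).
  by move/parity_accepting_ext: acc; apply => m; rewrite prio_succ.
have runs := safra_run_correct (fun m => proj1 (list_at_wf m)) (fun m => erefl)
  list_at_step parent_at_alive.
split => [/shift /runs [x [xS xp xF]]|[r [run acc hits]]].
  have [run cnts] := branch_is_run xS xp.
  exists x; split; [done|exact: xF|move=> j].
  by apply/(gap_bounded_iff _ _ (hb j)) => m; case: (cnts j m).
apply/shift/runs.
have rb j m : gap (Fs j) r m < bs j by move: m; apply/(gap_bounded_iff _ _ (hb j)).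
have T := run_tracked hnc run rb.
by exists r; split => m; case: (T m).
Qed.
End Word.
End Automaton.

Theorem mainTheorem11 (Sigma Q : finType) (Q0 : {set Q})
    (Delta : {set Q * Sigma * Q}) (F : {set Q})
    (k : nat) (Fs : 'I_k -> {set Q}) (bs : 'I_k -> nat) :
  (forall j, 0 < bs j) ->
  non_confluent Q0 Delta ->
  exists P : DPA Sigma,
    (forall w : word Sigma,
       dpa_accepts P w <->
       exists r : nat -> Q,
         [/\ is_run Q0 Delta w r, buchi_accepting F r &
             forall j : 'I_k, infixes_hit (Fs j) (bs j) r]) /\
    dpa_size P <= 2 ^ ((#|Q| + 1) ^ 2) * (\prod_(j < k) (bs j + 1)) ^ #|Q| /\
    dpa_num_priorities P <= 2 * #|Q| + 1.
Proof.
move=> hb hnc; exists (safra_dpa Q0 Delta F Fs bs); split; last split.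
- by move=> w; apply: safra_dpa_correct.
- exact: safra_dpa_size.
- exact: safra_dpa_priorities.
Qed.
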